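(* Every EPS-graph is $1$-critical, but not $0$-critical.
   Context: All graphs are finite and simple; $\mathrm{Forb}(H)$ is the family of graphs with no induced subgraph isomorphic to $H$. $\mathcal{C}$ is the family of complete graphs; $\iota(J)$ is the family of graphs isomorphic to induced subgraphs of $J$; $\mathcal{F}_1\vee\mathcal{F}_2$ (resp. $\mathcal{F}_1\wedge\mathcal{F}_2$) is the family of disjoint unions (resp. joins) of a graph in $\mathcal{F}_1$ and a graph in $\mathcal{F}_2$; $S_2$ is the edgeless graph on $2$ vertices, $K_2$ an edge. $\mathcal{C}^+$ is the family of graphs $G$ that are complete or such that $G\setminus v$ is complete for some $v\in V(G)$ with $\deg(v)\le1$. The complement of a star $K_{1,m}$ is called the complement of a star. For a positive integer $l$, a graph $H$ is an $l$-EPS-graph if: (EPS1) for every $1\le s\le l$, $V(H)$ can be partitioned into $s$ stable sets and $l-s$ cliques; (EPS2) for each $\mathcal{G}\in\{\iota(S_2)\vee\mathcal{C},\iota(K_2)\vee\mathcal{C},\iota(S_2)\wedge\mathcal{C},\mathcal{C}^+\}$, $V(H)$ can be partitioned into $l-1$ cliques and a set inducing a graph in $\mathcal{G}$; (EPS3) there is no partition $(X_1,\dots,X_l)$ of $V(H)$ such that $H[X_1]$ is a clique or a complement of a star and $X_i$ is a clique for $2\le i\le l$. An EPS-graph is an $l$-EPS-graph for some $l$. $\mathcal{H}(s,t)$ is the family of graphs whose vertex set partitions into $s$ stable sets and $t$ cliques. For hereditary $\mathcal{F}$, $\chi_c(\mathcal{F})$ is the maximum $l$ with $\mathcal{H}(s,l-s)\subseteq\mathcal{F}$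 for some $0\le s\le l$. With $l=\chi_c(\mathcal{F})$, $J$ is $\mathcal{F}$-reduced if there is $0\le s\le l-1$ such that $\mathcal{F}$ contains every graph whose vertex set partitions into $l$ parts, one inducing a graph isomorphic to an induced subgraph of $J$, $s$ stable sets and $l-1-s$ cliques; $\mathrm{red}(\mathcal{F})$ is the family of $\mathcal{F}$-reduced graphs. A graph $G$ is an $s$-star if there is $S\subseteq V(G)$, $|S|\le s$, with $G-S$ complete or edgeless and every vertex of $S$ adjacent to all or none of $V(G)\setminus S$. A graph $H$ is $s$-critical if there is $n_0$ such that every $K\in\mathrm{red}(\mathrm{Forb}(H))$ with $|V(K)|\ge n_0$ is an $s$-star. *)

From mathcomp Require Import all_boot.
Set Implicit Arguments. Unset Strict Implicit. Unset Printing Implicit Defensive.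

Record graph := Graph {
  vert : finType;
  adj : rel vert;
  adj_sym : symmetric adj;
  adj_irr : irreflexive adj }.

Definition gfam := graph -> Prop.

Section Induced.
Variables (G : graph) (A : {set vert G}).
Definition ind_vert : finType := {x : vert G | x \in A}.
Definition ind_adj : rel ind_vert := fun x y => adj (val x) (val y).
Lemma ind_adj_sym : symmetric ind_adj.
Proof. by move=> x y; rewrite /ind_adj adj_sym. Qed.
Lemma ind_adj_irr : irreflexive ind_adj.
Proof. by move=> x; rewrite /ind_adj adj_irr. Qed.
Definition induced : graph := Graph ind_adj_sym ind_adj_irr.
End Induced.

Section Compl.
Variable G : graph.
Definition compl_adj : rel (vert G) := fun x y => (x != y) && ~~ adj x y.
Lemma compl_adj_sym : symmetric compl_adj.
Proof. by move=> x y; rewrite /compl_adj eq_sym adj_sym. Qed.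
Lemma compl_adj_irr : irreflexive compl_adj.
Proof. by move=> x; rewrite /compl_adj eqxx. Qed.
Definition compl : graph := Graph compl_adj_sym compl_adj_irr.
End Compl.

(* the star K_{1,m} on 'I_m.+1, with centre ord0 *)
Definition star_adj (m : nat) : rel 'I_m.+1 :=
  fun x y => (x == ord0) (+) (y == ord0).
Arguments star_adj m : clear implicits.
Lemma star_adj_sym (m : nat) : symmetric (star_adj m).
Proof. by move=> x y; rewrite /star_adj addbC. Qed.
Lemma star_adj_irr (m : nat) : irreflexive (star_adj m).
Proof. by move=> x; rewrite /star_adj addbb. Qed.
Definition star (m : nat) : graph := Graph (@star_adj_sym m) (@star_adj_irr m).

Definition S2_adj : rel 'I_2 := fun _ _ => false.
Lemma S2_adj_sym : symmetric S2_adj. Proof. by []. Qed.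
Lemma S2_adj_irr : irreflexive S2_adj. Proof. by []. Qed.
Definition S2 : graph := Graph S2_adj_sym S2_adj_irr.
Definition K2_adj : rel 'I_2 := fun x y => x != y.
Lemma K2_adj_sym : symmetric K2_adj.
Proof. by move=> x y; rewrite /K2_adj eq_sym. Qed.
Lemma K2_adj_irr : irreflexive K2_adj.
Proof. by move=> x; rewrite /K2_adj eqxx. Qed.
Definition K2 : graph := Graph K2_adj_sym K2_adj_irr.

Definition iso (G H : graph) : Prop :=
  exists f : vert G -> vert H, bijective f /\ forall x y, adj (f x) (f y) = adj x y.
Definition is_induced_sub (H G : graph) : Prop :=
  exists f : vert H -> vert G, injective f /\ forall x y, adj (f x) (f y) = adj x y.

Definition iota (J : graph) : gfam := fun G => is_induced_sub G J.
Definition Forb (H : graph) : gfam := fun G => ~ is_induced_sub H G.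

Definition stable (G : graph) (A : {set vert G}) : Prop :=
  forall x y, x \in A -> y \in A -> ~~ adj x y.
Definition clique (G : graph) (A : {set vert G}) : Prop :=
  forall x y, x \in A -> y \in A -> x != y -> adj x y.
Definition complete (G : graph) : Prop := clique [set: vert G].

Definition Cfam : gfam := complete.

Definition disj_union (F1 F2 : gfam) : gfam := fun G =>
  exists A : {set vert G}, F1 (induced A) /\ F2 (induced (~: A)) /\
    forall x y, x \in A -> y \notin A -> ~~ adj x y.
Definition join_fam (F1 F2 : gfam) : gfam := fun G =>
  exists A : {set vert G}, F1 (induced A) /\ F2 (induced (~: A)) /\
    forall x y, x \in A -> y \notin A -> adj x y.

Definition Cplus : gfam := fun G =>
  complete G \/
  exists v : vert G, #|[set w | adj v w]| <= 1 /\ complete (induced [set~ v]).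

Definition costar (G : graph) : Prop := exists m, iso G (compl (star m)).

(* H(s,t): vertex set partitions into s stable sets and t cliques
   (colour classes i < s stable, the others cliques; parts may be empty) *)
Definition Hst (s t : nat) : gfam := fun G =>
  exists c : vert G -> 'I_(s + t),
    forall i : 'I_(s + t),
      if i < s then stable [set x | c x == i] else clique [set x | c x == i].

Definition sub_fam (F1 F2 : gfam) : Prop := forall G, F1 G -> F2 G.

Definition chi_c_is (F : gfam) (l : nat) : Prop :=
  (exists s, s <= l /\ sub_fam (Hst s (l - s)) F) /\
  (forall l', (exists s, s <= l' /\ sub_fam (Hst s (l' - s)) F) -> l' <= l).

Definition reduced (F : gfam) (J : graph) : Prop :=
  exists l, chi_c_is F l /\
  exists s, s < l /\
    forall G : graph,
      (exists c : vert G -> option 'I_(s + (l - 1 - s)),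
         iota J (induced [set x | c x == None]) /\
         forall i : 'I_(s + (l - 1 - s)),
           if i < s then stable [set x | c x == Some i]
           else clique [set x | c x == Some i]) ->
      F G.

Definition sstar (s : nat) (G : graph) : Prop :=
  exists S : {set vert G}, #|S| <= s /\
    (clique (~: S) \/ stable (~: S)) /\
    forall v, v \in S ->
      (forall w, w \notin S -> adj v w) \/ (forall w, w \notin S -> ~~ adj v w).

Definition critical (s : nat) (H : graph) : Prop :=
  exists n0, forall K : graph, reduced (Forb H) K -> n0 <= #|vert K| -> sstar s K.

Definition EPS2_for (l : nat) (H : graph) (F : gfam) : Prop :=
  exists c : vert H -> option 'I_(l - 1),
    (forall i, clique [set x | c x == Some i]) /\ F (induced [set x | c x == None]).

Definition lEPS (l : nat) (H : graph) : Prop :=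
  0 < l /\
  (forall s, 1 <= s <= l -> Hst s (l - s) H) /\
  EPS2_for l H (disj_union (iota S2) Cfam) /\
  EPS2_for l H (disj_union (iota K2) Cfam) /\
  EPS2_for l H (join_fam (iota S2) Cfam) /\
  EPS2_for l H Cplus /\
  ~ (exists c : vert H -> option 'I_(l - 1),
        (complete (induced [set x | c x == None]) \/
         costar (induced [set x | c x == None])) /\
        forall i, clique [set x | c x == Some i]).

Definition EPS (H : graph) : Prop := exists l, lEPS l H.

From Pilot Require Import Defs.
From mathcomp Require Import all_boot perm zify.
Set Implicit Arguments. Unset Strict Implicit. Unset Printing Implicit Defensive.

(* (EPS1)-(EPS3) pin down chi_c(Forb H) = l: an l-EPS-graph H splits into s stable sets and l - s
   cliques for 1 <= s <= l, and (via C^+) into l + 1 cliques, but never into l cliques.  Hence a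
   Forb(H)-reduced graph K with parameter s contains no H[A] such that H - A splits into s stable
   sets and l - 1 - s cliques.  Taking for A a colour class of a suitable splitting of H, K has no
   stable set (and, if s > 0, no clique) on |H| vertices, so by Ramsey's theorem a large K has
   s = 0 and a clique Q on 2|H| vertices.  The four graphs given by (EPS2) then do not embed in K;
   this forces every vertex with a neighbour in Q to be complete to Q, the vertices without one to
   form a set Z with |Z| <= 1, and K - Z to be a clique anticomplete to Z, so K is a 1-star.
   Conversely, by (EPS3) every complement of a star is Forb(H)-reduced, and those on at least three
   vertices are neither complete nor edgeless, so H is not 0-critical. *)

(** * Embeddings of induced subgraphs *)

Definition embedding (G K : graph) (f : vert G -> vert K) : Prop :=
  injective f /\ forall x y, adj (f x) (f y) = adj x y.

Lemma induced_sub_refl (G : graph) : is_induced_sub G G.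
Proof. by exists id; split. Qed.

Lemma embedding_comp (G1 G2 G3 : graph) (f : vert G1 -> vert G2) (g : vert G2 -> vert G3) :
  embedding f -> embedding g -> embedding (g \o f).
Proof.
move=> [f_inj f_adj] [g_inj g_adj]; split; first exact: inj_comp.
by move=> x y /=; rewrite g_adj f_adj.
Qed.

Lemma induced_sub_trans (G1 G2 G3 : graph) :
  is_induced_sub G1 G2 -> is_induced_sub G2 G3 -> is_induced_sub G1 G3.
Proof. by move=> [f f_emb] [g g_emb]; exists (g \o f); apply: embedding_comp. Qed.

Lemma induced_sub_preimset (H G : graph) (f : vert H -> vert G) (B : {set vert G}) :
  embedding f -> is_induced_sub (induced (f @^-1: B)) (induced B).
Proof.
move=> [f_inj f_adj].
have fB (x : vert (induced (f @^-1: B))) : f (val x) \in B by have := valP x; rewrite inE.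
exists (fun x => Sub (f (val x)) (fB x) : vert (induced B)); split.
  by move=> x y /(congr1 val) /f_inj /val_inj.
by move=> x y; apply: f_adj.
Qed.

Lemma card_vert_induced (G : graph) (A : {set vert G}) : #|vert (induced A)| = #|A|.
Proof. by rewrite card_sig; apply: eq_card => x; rewrite inE. Qed.

Lemma complete_induced (G : graph) (A : {set vert G}) : complete (induced A) <-> clique A.
Proof.
split=> [cA x y xA yA xy | cA x y _ _ xy].
  by apply: (cA (Sub x xA) (Sub y yA)); rewrite ?inE // -(inj_eq val_inj).
by apply: cA; rewrite ?(valP x) ?(valP y) ?(inj_eq val_inj).
Qed.

Lemma clique_subset (G : graph) (A B : {set vert G}) : A \subset B -> clique B -> clique A.
Proof. by move=> /subsetP AB cB x y /AB xB /AB; apply: cB. Qed.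

Lemma clique_setU1 (G : graph) (v : vert G) (Q : {set vert G}) :
  clique Q -> {in Q, forall q, adj v q} -> clique (v |: Q).
Proof.
move=> cQ vQ x y /setU1P[-> | xQ] /setU1P[-> | yQ]; rewrite ?eqxx // => xy.
- exact: vQ.
- by rewrite adj_sym vQ.
- exact: cQ.
Qed.

Lemma stable_setU1 (G : graph) (v : vert G) (Q : {set vert G}) :
  stable Q -> {in Q, forall q, ~~ adj v q} -> stable (v |: Q).
Proof.
move=> sQ vQ x y /setU1P[-> | xQ] /setU1P[-> | yQ]; rewrite ?adj_irr //.
- exact: vQ.
- by rewrite adj_sym vQ.
- exact: sQ.
Qed.

Lemma card_inj_into (T1 T2 : finType) (y0 : T2) (A : {set T1}) (B : {set T2}) :
  #|A| <= #|B| -> exists2 h : T1 -> T2, {in A &, injective h} & {in A, forall x, h x \in B}.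
Proof.
move=> AB; pose h x := nth y0 (enum B) (index x (enum A)).
have idx_lt x : x \in A -> index x (enum A) < size (enum B).
  by move=> xA; rewrite -cardE (leq_trans _ AB) // cardE index_mem mem_enum.
exists h => [x y xA yA /eqP | x xA]; last by rewrite -mem_enum mem_nth ?idx_lt.
rewrite nth_uniq ?enum_uniq ?idx_lt // => /eqP eq_idx.
by rewrite -[x](nth_index x (s := enum A)) ?mem_enum // eq_idx nth_index ?mem_enum.
Qed.

Lemma induced_sub_of_adj (Y K : graph) (f : vert Y -> vert K) :
  injective f -> (forall x y, x != y -> adj (f x) (f y) = adj x y) -> is_induced_sub Y K.
Proof.
move=> f_inj f_adj; exists f; split=> // x y.
by have [-> | xy] := eqVneq x y; rewrite ?adj_irr ?f_adj.
Qed.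

Lemma clique_embed (Y K : graph) (k0 : vert K) (Q : {set vert K}) :
  complete Y -> clique Q -> #|vert Y| <= #|Q| -> is_induced_sub Y K.
Proof.
move=> cY cQ; rewrite -cardsT => /(card_inj_into k0) [h h_inj hQ].
have {}h_inj : injective h by move=> x y; apply: h_inj; rewrite inE.
apply: (induced_sub_of_adj h_inj) => x y xy.
by rewrite cY ?cQ ?hQ ?inE ?(inj_eq h_inj).
Qed.

Lemma stable_embed (Y K : graph) (k0 : vert K) (Q : {set vert K}) :
  stable [set: vert Y] -> stable Q -> #|vert Y| <= #|Q| -> is_induced_sub Y K.
Proof.
move=> sY sQ; rewrite -cardsT => /(card_inj_into k0) [h h_inj hQ].
have {}h_inj : injective h by move=> x y; apply: h_inj; rewrite inE.
apply: (induced_sub_of_adj h_inj) => x y _.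
by rewrite (negbTE (sY _ _ _ _)) ?(negbTE (sQ _ _ _ _)) ?hQ ?inE.
Qed.

Lemma beside_clique_embed (J Y K : graph) (k0 : vert K) (A : {set vert Y}) (beta : bool)
    (p : vert J -> vert K) (Q : {set vert K}) :
  is_induced_sub (induced A) J -> clique (~: A) -> {in A & ~: A, forall x y, adj x y = beta} ->
  embedding p -> clique Q -> (forall i, p i \notin Q) ->
  (forall i q, q \in Q -> adj (p i) q = beta) -> #|~: A| <= #|Q| -> is_induced_sub Y K.
Proof.
move=> [j j_emb] cA cross p_emb cQ pQ pQ_adj /(card_inj_into k0) [h h_inj hQ].
have [g_inj g_adj] := embedding_comp j_emb p_emb; set g := p \o j in g_inj g_adj.
have gQ x : g x \notin Q by apply: pQ.
have gQ_adj x q : q \in Q -> adj (g x) q = beta by apply: pQ_adj.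
pose f y := if insub y is Some y' then g y' else h y.
have fA y (yA : y \in A) : f y = g (Sub y yA) by rewrite /f insubT.
have fN y : y \notin A -> f y = h y by move=> yA; rewrite /f insubF ?(negbTE yA).
have hQ' y : y \notin A -> h y \in Q by move=> yA; apply: hQ; rewrite inE.
have f_cross x y : x \in A -> y \notin A -> adj (f x) (f y) = adj x y.
  by move=> xA yA; rewrite fA fN // gQ_adj ?hQ' // cross ?inE.
apply: (@induced_sub_of_adj _ _ f) => [x y | x y xy];
  case: (boolP (x \in A)) => xA; case: (boolP (y \in A)) => yA.
- by rewrite !fA => /g_inj /(congr1 val).
- by rewrite fA fN // => gh; have := gQ (Sub x xA); rewrite gh hQ'.
- by rewrite fN // fA => hg; have := gQ (Sub y yA); rewrite -hg hQ'.
- by rewrite !fN //; apply: h_inj; rewrite inE.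
- by rewrite !fA g_adj.
- exact: f_cross.
- by rewrite adj_sym f_cross // adj_sym.
- by rewrite !fN // cA ?cQ ?hQ' ?inE // (inj_in_eq h_inj) ?inE.
Qed.

Lemma Cplus_embed (Y K : graph) (Q : {set vert K}) (u z : vert K) :
  Cplus Y -> clique Q -> u \in Q -> z \notin Q -> adj z u ->
  {in Q :\ u, forall q, ~~ adj z q} -> #|vert Y| < #|Q| -> is_induced_sub Y K.
Proof.
move=> [cY | [v [deg_v /complete_induced cYv]]] cQ uQ zQ zu zQu YQ.
  exact: (clique_embed u cY cQ (ltnW YQ)).
pose B := [set y | (y != v) && ~~ adj v y].
have BQ : #|B| <= #|Q :\ u|.
  have : #|B| <= #|[set~ v]| by apply/subset_leq_card/subsetP => y; rewrite !inE => /andP[].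
  by move: YQ; rewrite cardsC1 (cardsD1 u Q) uQ; lia.
have [h h_inj hQ] := card_inj_into u BQ.
have hB y : y != v -> ~~ adj v y -> h y \in Q :\ u by move=> yv vy; apply: hQ; rewrite inE yv.
pose f y := if y == v then z else if adj v y then u else h y.
have fv : f v = z by rewrite /f eqxx.
have fQ y : y != v -> f y \in Q.
  by move=> yv; rewrite /f (negbTE yv); case: ifPn => // /(hB _ yv) /setD1P[].
have fz y : y != v -> adj z (f y) = adj v y.
  by move=> yv; rewrite /f (negbTE yv); case: ifPn => // /(hB _ yv) /zQu /negbTE.
have f_neq x y : x != v -> y != v -> x != y -> f x != f y.
  move=> xv yv xy; rewrite /f (negbTE xv) (negbTE yv).
  case: ifPn => vx; case: ifPn => vy.
  - by apply: contraNneq xy => _; apply/eqP; move/card_le1_eqP: deg_v; apply; rewrite inE.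
  - by have /setD1P[] := hB _ yv vy; rewrite eq_sym.
  - by have /setD1P[] := hB _ xv vx.
  - by rewrite (inj_in_eq h_inj) ?inE ?xv ?yv.
apply: (induced_sub_of_adj (f := f)) => [x y /eqP | x y]; first apply: contraTeq;
  have [-> | xv] := eqVneq x v; have [-> | yv] := eqVneq y v; rewrite ?eqxx // => xy.
- by rewrite fv; apply: (contraNneq _ zQ) => ->; apply: fQ.
- by rewrite fv eq_sym; apply: (contraNneq _ zQ) => ->; apply: fQ.
- exact: f_neq.
- by rewrite fv fz // eq_sym.
- by rewrite fv adj_sym fz // adj_sym.
- by rewrite cQ ?fQ ?f_neq ?(cYv x y) ?inE.
Qed.

Definition pair (K : graph) (a b : vert K) (i : 'I_2) : vert K := if i == ord0 then a else b.

Lemma pairP (K : graph) (P : vert K -> Prop) (a b : vert K) (i : 'I_2) :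
  P a -> P b -> P (pair a b i).
Proof. by rewrite /pair; case: ifP. Qed.

Lemma pair_inj (K : graph) (a b : vert K) : a != b -> injective (pair a b).
Proof.
move=> ab i j; rewrite /pair; case: ifPn => [/eqP-> | i0]; case: ifPn => [/eqP-> | j0] //.
- by move/eqP; rewrite (negbTE ab).
- by move/esym/eqP; rewrite (negbTE ab).
- move=> _; apply/val_inj; move: i0 j0 (ltn_ord i) (ltn_ord j).
  by rewrite -!(inj_eq val_inj) /=; lia.
Qed.

Lemma pair_embedding_S2 (K : graph) (a b : vert K) :
  a != b -> ~~ adj a b -> @embedding S2 K (pair a b).
Proof.
move=> ab nab; split=> [| i j]; first exact: pair_inj.
rewrite /pair /=; do 2 case: ifP => _; rewrite ?adj_irr //; first exact: negbTE.
by rewrite adj_sym; apply: negbTE.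
Qed.

Lemma pair_embedding_K2 (K : graph) (a b : vert K) : adj a b -> @embedding K2 K (pair a b).
Proof.
move=> ab; have ab_ne : a != b by apply: contraTneq ab => ->; rewrite adj_irr.
split=> [| i j]; first exact: pair_inj.
rewrite /= /K2_adj -(inj_eq (pair_inj ab_ne)) /pair.
do 2 case: ifP => _; rewrite ?adj_irr ?eqxx //; first by rewrite ab_ne.
by rewrite adj_sym ab eq_sym ab_ne.
Qed.

Lemma disj_union_embed (J Y K : graph) (k0 : vert K) (p : vert J -> vert K) (Q : {set vert K}) :
  disj_union (Defs.iota J) Cfam Y -> embedding p -> clique Q ->
  (forall i, p i \notin Q /\ {in Q, forall q, ~~ adj (p i) q}) -> #|vert Y| <= #|Q| ->
  is_induced_sub Y K.
Proof.
move=> [A [AJ [/complete_induced cA cross]]] p_emb cQ pQ YQ.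
apply: (beside_clique_embed k0 (beta := false) AJ cA _ p_emb cQ).
- by move=> x y xA; rewrite inE => /(cross x y xA)/negbTE.
- by move=> i; have [] := pQ i.
- by move=> i q qQ; have [_ /(_ q qQ)/negbTE] := pQ i.
- exact: leq_trans (max_card _) YQ.
Qed.

Lemma join_embed (J Y K : graph) (k0 : vert K) (p : vert J -> vert K) (Q : {set vert K}) :
  join_fam (Defs.iota J) Cfam Y -> embedding p -> clique Q ->
  (forall i, p i \notin Q /\ {in Q, forall q, adj (p i) q}) -> #|vert Y| <= #|Q| ->
  is_induced_sub Y K.
Proof.
move=> [A [AJ [/complete_induced cA cross]]] p_emb cQ pQ YQ.
apply: (beside_clique_embed k0 (beta := true) AJ cA _ p_emb cQ).
- by move=> x y xA; rewrite inE => /(cross x y xA).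
- by move=> i; have [] := pQ i.
- by move=> i q qQ; have [_ /(_ q qQ)] := pQ i.
- exact: leq_trans (max_card _) YQ.
Qed.

(** * Ramsey's theorem *)

Lemma ramsey (G : graph) (a b : nat) (V : {set vert G}) :
  2 ^ (a + b) <= #|V| ->
  exists2 Q : {set vert G}, Q \subset V & (clique Q /\ a <= #|Q|) \/ (stable Q /\ b <= #|Q|).
Proof.
have [k] := ubnP (a + b); elim: k a b V => // k IH a b V ab_k V_big.
have [c0 s0] : clique (set0 : {set vert G}) /\ stable (set0 : {set vert G}).
  by split=> x y; rewrite inE.
case: a => [|a] in ab_k V_big *; first by exists set0; rewrite ?sub0set //; left.
case: b => [|b] in ab_k V_big *; first by exists set0; rewrite ?sub0set //; right.
have /card_gt0P[v vV] : 0 < #|V| by rewrite (leq_trans _ V_big) ?expn_gt0.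
pose N := (V :\ v) :&: [set w | adj v w].
pose M := (V :\ v) :\: [set w | adj v w].
have NM : #|N| + #|M| = #|V|.-1 by rewrite cardsID (cardsD1 v V) vV.
have NV : N \subset V :\ v by apply: subsetIl.
have MV : M \subset V :\ v by apply: subsetDl.
have grow (W Q : {set vert G}) : W \subset V :\ v -> Q \subset W ->
    [/\ v |: Q \subset V, Q \subset V & #|v |: Q| = #|Q|.+1].
  move=> WV QW; have QV := subset_trans QW WV; split.
  - by rewrite subUset sub1set vV (subset_trans QV (subsetDl _ _)).
  - exact: subset_trans QV (subsetDl _ _).
  - by rewrite cardsU1; case: (boolP (v \in Q)) => // /(subsetP QV); rewrite setD11.
have [N_big | M_big] := leqP (2 ^ (a + b.+1)) #|N|.
  have [Q QN [[cQ aQ] | sQ]] := IH a b.+1 N ltac:(lia) N_big; have [vQV QV vQ] := grow _ _ NV QN.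
    exists (v |: Q) => //; left; rewrite vQ ltnS; split=> //.
    by apply: clique_setU1 => // q /(subsetP QN); rewrite !inE => /andP[_].
  by exists Q => //; right.
have {}M_big : 2 ^ (a.+1 + b) <= #|M| by move: V_big M_big NM; rewrite addSn !addnS !expnS; lia.
have [Q QM [cQ | [sQ bQ]]] := IH a.+1 b M ltac:(lia) M_big; have [vQV QV vQ] := grow _ _ MV QM.
  by exists Q => //; left.
exists (v |: Q) => //; right; rewrite vQ ltnS; split=> //.
by apply: stable_setU1 => // q /(subsetP QM); rewrite !inE => /andP[].
Qed.

(** * Splitting into stable sets and cliques *)

Definition split_colouring (G : graph) (s : nat) (phi : vert G -> nat) : Prop :=
  forall x y, x != y -> phi x = phi y -> if phi x < s then ~~ adj x y else adj x y.

Lemma HstP (G : graph) (s t : nat) :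
  Hst s t G <-> exists2 phi : vert G -> nat, (forall x, phi x < s + t) & split_colouring s phi.
Proof.
split=> [[c c_ok] | [phi phi_lt phi_ok]].
  exists (fun x => val (c x)) => [x | x y xy /val_inj cxy]; first exact: ltn_ord.
  by have := c_ok (c x); case: ifP => _ /(_ x y); rewrite !inE cxy eqxx => /(_ isT isT) //; apply.
exists (fun x => Ordinal (phi_lt x)) => i.
have col x : x \in [set x | Ordinal (phi_lt x) == i] -> phi x = i by rewrite inE => /eqP <-.
case: ifP => si x y /col xi /col yi.
  2: by move=> xy; have := phi_ok x y xy; rewrite xi yi si; apply.
have [-> | xy] := eqVneq x y; first by rewrite adj_irr.
by have := phi_ok x y xy; rewrite xi yi si; apply.
Qed.

Lemma Hst_induced_sub (G G' : graph) (s t : nat) :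
  is_induced_sub G' G -> Hst s t G -> Hst s t G'.
Proof.
move=> [f [f_inj f_adj]] /HstP[phi phi_lt phi_ok]; apply/HstP.
exists (phi \o f) => [x | x y xy fxy]; first exact: phi_lt.
by rewrite -f_adj; apply: phi_ok; rewrite ?(inj_eq f_inj).
Qed.

Lemma Hst_widen (G : graph) (s t s' t' : nat) :
  s <= s' -> t <= t' -> Hst s t G -> Hst s' t' G.
Proof.
move=> ss' tt' /HstP[phi phi_lt phi_ok]; apply/HstP.
pose psi x := if phi x < s then phi x else phi x + (s' - s).
have psi_lt x : (psi x < s') = (phi x < s) by rewrite /psi; case: (ltnP (phi x) s); lia.
exists psi => [x | x y xy]; first by have := phi_lt x; rewrite /psi; case: (ltnP (phi x) s); lia.
have psi_eq : psi x = psi y -> phi x = phi y.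
  by rewrite /psi; case: (ltnP (phi x) s); case: (ltnP (phi y) s); lia.
by move=> /psi_eq e; rewrite psi_lt; apply: phi_ok.
Qed.

Lemma Hst_complete (G : graph) : complete G -> Hst 0 1 G.
Proof. by move=> cG; apply/HstP; exists (fun=> 0) => // x y xy _; apply: cG; rewrite ?inE. Qed.

Lemma Hst0_glue (G : graph) (A : {set vert G}) (a b : nat) :
  Hst 0 a (induced A) -> Hst 0 b (induced (~: A)) -> Hst 0 (a + b) G.
Proof.
move=> /HstP[phiA phiA_lt phiA_ok] /HstP[phiB phiB_lt phiB_ok]; apply/HstP.
pose phi x := if insub x is Some y then phiA y else if insub x is Some z then a + phiB z else 0.
have phiA_E x (xA : x \in A) : phi x = phiA (Sub x xA) by rewrite /phi insubT.
have phiB_E x (xA : x \in ~: A) : phi x = a + phiB (Sub x xA).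
  by rewrite /phi insubF ?insubT //; move: xA; rewrite inE => /negbTE.
have phi_in x (xA : x \in A) : phi x < a by rewrite (phiA_E x xA) phiA_lt.
have phi_out x : x \notin A -> a <= phi x < a + b.
  by rewrite -in_setC => xA; rewrite (phiB_E x xA) leq_addr ltn_add2l phiB_lt.
have sub_neq (B : {set vert G}) x y (xB : x \in B) (yB : y \in B) :
    x != y -> (Sub x xB : vert (induced B)) != Sub y yB.
  by rewrite -(inj_eq val_inj).
exists phi => [x | x y xy]; rewrite ?ltn0.
  case: (boolP (x \in A)) => xA; first by have := phi_in x xA; lia.
  by have /andP[_] := phi_out x xA.
case: (boolP (x \in A)) => xA; case: (boolP (y \in A)) => yA.
- rewrite (phiA_E x xA) (phiA_E y yA) => e.
  by have := phiA_ok _ _ (sub_neq _ _ _ xA yA xy) e.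
- by have := phi_in x xA; have := phi_out y yA; lia.
- by have := phi_in y yA; have := phi_out x xA; lia.
- have xA' : x \in ~: A by rewrite inE.
  have yA' : y \in ~: A by rewrite inE.
  rewrite (phiB_E x xA') (phiB_E y yA') => /addnI e.
  by have := phiB_ok _ _ (sub_neq _ _ _ xA' yA' xy) e.
Qed.

Lemma Hst_Cplus (G : graph) : Cplus G -> Hst 0 2 G.
Proof.
case=> [cG | [v [_ cGv]]]; first exact: Hst_widen (Hst_complete cG).
apply: (@Hst0_glue _ [set v] 1 1); apply: Hst_complete => //.
by apply/complete_induced => x y /set1P-> /set1P->; rewrite eqxx.
Qed.

Lemma Hst_remove_stable (G : graph) (s t : nat) :
  Hst s.+1 t G -> exists2 A : {set vert G}, stable A & Hst s t (induced (~: A)).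
Proof.
move=> /HstP[phi phi_lt phi_ok]; pose A := [set x | phi x == s]; exists A.
  move=> x y; rewrite !inE => /eqP xs /eqP ys.
  have [-> | xy] := eqVneq x y; first by rewrite adj_irr.
  by have := phi_ok x y xy; rewrite xs ys ltnSn; apply.
have phi_ns (x : vert (induced (~: A))) : phi (val x) != s by have := valP x; rewrite !inE.
pose psi (x : vert (induced (~: A))) := let k := phi (val x) in if k < s then k else k.-1.
have psi_lt x : (psi x < s) = (phi (val x) < s.+1).
  by have := phi_ns x; rewrite /psi; case: (ltnP (phi (val x)) s); lia.
apply/HstP; exists psi => [x | x y xy].
  by have := phi_lt (val x); have := phi_ns x; rewrite /psi; case: (ltnP (phi (val x)) s); lia.
have psi_eq : psi x = psi y -> phi (val x) = phi (val y).
  have shift_inj m n : m != s -> n != s ->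
      (if m < s then m else m.-1) = (if n < s then n else n.-1) -> m = n.
    by case: (ltnP m s); case: (ltnP n s); lia.
  exact: shift_inj (phi_ns x) (phi_ns y).
have xy' : val x != val y by rewrite (inj_eq val_inj).
by move=> /psi_eq e; rewrite psi_lt; apply: phi_ok.
Qed.

Lemma Hst_remove_clique (G : graph) (s t : nat) :
  Hst s t.+1 G -> exists2 A : {set vert G}, clique A & Hst s t (induced (~: A)).
Proof.
move=> /HstP[phi phi_lt phi_ok]; pose A := [set x | phi x == s + t]; exists A.
  move=> x y; rewrite !inE => /eqP xst /eqP yst xy.
  by have := phi_ok x y xy; rewrite xst yst ltnNge leq_addr; apply.
have phi_lt' (x : vert (induced (~: A))) : phi (val x) < s + t.
  by have := valP x; have := phi_lt (val x); rewrite !inE addnS ltnS leq_eqVlt => /orP[->|].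
apply/HstP; exists (fun x => phi (val x)) => // x y xy.
by apply: phi_ok; rewrite (inj_eq val_inj).
Qed.

Lemma option_colouringP (G : graph) (s t : nat) (P : gfam) :
  (exists c : vert G -> option 'I_(s + t), P (induced [set x | c x == None]) /\
     forall i : 'I_(s + t),
       if i < s then stable [set x | c x == Some i] else clique [set x | c x == Some i])
  <-> exists2 A : {set vert G}, P (induced A) & Hst s t (induced (~: A)).
Proof.
split=> [[c [PA c_ok]] | [A PA [d d_ok]]].
  pose A := [set x | c x == None]; exists A => //; apply/HstP.
  have cS (x : vert (induced (~: A))) : exists i, c (val x) = Some i.
    by have := valP x; rewrite !inE; case: (c (val x)) => [i|] //; exists i.
  pose phi (x : vert (induced (~: A))) := if c (val x) is Some i then val i else 0.
  have phiE x i : c (val x) = Some i -> phi x = i by rewrite /phi => ->.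
  exists phi => [x | x y xy]; first by have [i /phiE->] := cS x.
  have [i ci] := cS x; have [j cj] := cS y; rewrite (phiE _ _ ci) (phiE _ _ cj) => /val_inj ij.
  have := c_ok i; case: ifP => _ /(_ (val x) (val y)); rewrite !inE ci cj ij eqxx.
    exact.
  by move=> /(_ isT isT); apply; rewrite (inj_eq val_inj).
pose c x := if insub x is Some y then Some (d y) else None.
have cE x i : c x = Some i -> exists2 y : vert (induced (~: A)), val y = x & d y = i.
  by rewrite /c; case: insubP => // y _ <- [<-]; exists y.
have cN : [set x | c x == None] = A.
  by apply/setP => x; rewrite !inE /c; case: insubP => [y | ]; rewrite inE ?negbK // => /negbTE.
exists c; rewrite cN; split=> // i; have := d_ok i; case: ifP => _ d_i x1 x2;
  rewrite !inE => /eqP/cE[y1 <- d1] /eqP/cE[y2 <- d2]; have := d_i y1 y2; rewrite !inE d1 d2 eqxx.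
  exact.
by move=> /(_ isT isT) y12 x12; apply: y12; rewrite -(inj_eq val_inj).
Qed.

(** * Forb(H) for an EPS-graph H *)

Lemma EPS2_forP (l : nat) (H : graph) (F : gfam) :
  EPS2_for l H F <-> exists2 A : {set vert H}, F (induced A) & Hst 0 (l - 1) (induced (~: A)).
Proof. by rewrite -(option_colouringP _ 0); split=> -[c [c_ok FA]]; exists c. Qed.

Lemma lEPS_no_costar_remainder (l : nat) (H : graph) : lEPS l H ->
  ~ exists2 A : {set vert H},
      complete (induced A) \/ costar (induced A) & Hst 0 (l - 1) (induced (~: A)).
Proof.
move=> [_ [_ [_ [_ [_ [_ no_cover]]]]]]; pose P Y := complete Y \/ costar Y.
by move=> /(option_colouringP _ 0 _ P) [c [? ?]]; apply: no_cover; exists c.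
Qed.

Lemma lEPS_not_Hst0 (l : nat) (H : graph) : lEPS l H -> ~ Hst 0 l H.
Proof.
move=> H_eps; have [l_gt0 _] := H_eps.
rewrite -(prednK l_gt0) -subn1 => /Hst_remove_clique[A cA HA].
by apply: (lEPS_no_costar_remainder H_eps); exists A => //; left; apply/complete_induced.
Qed.

Lemma lEPS_Hst_gt (l l' s : nat) (H : graph) : lEPS l H -> l < l' -> s <= l' -> Hst s (l' - s) H.
Proof.
move=> [l_gt0 [H_split [_ [_ [_ [/EPS2_forP[A /Hst_Cplus HA HA'] _]]]]]] ll' sl'.
have [-> | s_gt0] := posnP s.
  by apply: Hst_widen (Hst0_glue HA HA'); lia.
have [sl | ls] := leqP s l.
  by apply: Hst_widen (H_split s _) => //; lia.
by apply: Hst_widen (H_split l _); lia.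
Qed.

Lemma chi_c_Forb (l : nat) (H : graph) : lEPS l H -> chi_c_is (Forb H) l.
Proof.
move=> H_eps; split=> [| l' [s [sl' /(_ H) H_free]]].
  exists 0; split=> // G; rewrite subn0 => G_cover HG.
  exact: (lEPS_not_Hst0 H_eps) (Hst_induced_sub HG G_cover).
rewrite leqNgt; apply/negP => ll'.
exact: (H_free (lEPS_Hst_gt H_eps ll' sl') (induced_sub_refl H)).
Qed.

Lemma chi_c_is_unique (F : gfam) (l1 l2 : nat) : chi_c_is F l1 -> chi_c_is F l2 -> l1 = l2.
Proof.
by move=> [F_l1 max_l1] [F_l2 max_l2]; apply/eqP; rewrite eqn_leq (max_l2 l1 F_l1) (max_l1 l2 F_l2).
Qed.

Definition remainder_free (H K : graph) (s t : nat) : Prop :=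
  forall A : {set vert H}, Hst s t (induced (~: A)) -> ~ is_induced_sub (induced A) K.

Lemma lEPS_reduced (l : nat) (H K : graph) :
  lEPS l H -> reduced (Forb H) K -> exists2 s, s < l & remainder_free H K s (l - 1 - s).
Proof.
move=> H_eps [l' [chi_l' [s [sl' K_red]]]]; have <- := chi_c_is_unique chi_l' (chi_c_Forb H_eps).
exists s => // A HA AK; apply: (K_red H _ (induced_sub_refl H)).
by apply/(option_colouringP _ _ _ (Defs.iota K)); exists A.
Qed.

Lemma remainder_free_stable (H K : graph) (s t : nat) (k0 : vert K) (Q : {set vert K}) :
  Hst s.+1 t H -> remainder_free H K s t -> stable Q -> #|Q| < #|vert H|.
Proof.
move=> /Hst_remove_stable[A sA HA] K_free sQ; rewrite ltnNge; apply/negP => HQ.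
apply: (K_free A HA); apply: (stable_embed k0 _ sQ).
  by move=> x y _ _; apply: sA (valP x) (valP y).
by rewrite card_vert_induced (leq_trans (max_card _) HQ).
Qed.

Lemma remainder_free_clique (H K : graph) (s t : nat) (k0 : vert K) (Q : {set vert K}) :
  Hst s t.+1 H -> remainder_free H K s t -> clique Q -> #|Q| < #|vert H|.
Proof.
move=> /Hst_remove_clique[A cA HA] K_free cQ; rewrite ltnNge; apply/negP => HQ.
apply: (K_free A HA); apply: (clique_embed k0 _ cQ); first exact/complete_induced.
by rewrite card_vert_induced (leq_trans (max_card _) HQ).
Qed.

Lemma remainder_free_EPS2 (l : nat) (H K : graph) (F : gfam) :
  EPS2_for l H F -> remainder_free H K 0 (l - 1) ->
  exists Y, [/\ F Y, #|vert Y| <= #|vert H| & ~ is_induced_sub Y K].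
Proof.
move=> /EPS2_forP[A FA HA] K_free; exists (induced A).
by rewrite card_vert_induced max_card; split=> //; apply: K_free.
Qed.

(** * Complements of stars *)

Lemma costar_of_centre (Y : graph) (y0 : vert Y) :
  (forall x y, adj x y = (x != y) && ~~ ((x == y0) (+) (y == y0))) -> costar Y.
Proof.
move=> adjE; have Y_gt0 : 0 < #|vert Y| by apply/card_gt0P; exists y0.
exists #|vert Y|.-1.
pose r (y : vert Y) := cast_ord (esym (prednK Y_gt0)) (enum_rank y).
have r_inj : injective r by move=> x y /cast_ord_inj /enum_rank_inj.
pose f y := tperm (r y0) ord0 (r y).
have f_inj : injective f by move=> x y /perm_inj /r_inj.
have f0 y : (f y == ord0) = (y == y0) by rewrite (canF_eq (tpermK _ _)) tpermR (inj_eq r_inj).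
exists f; split; first by apply: inj_card_bij; rewrite // card_ord prednK.
by move=> x y; rewrite adjE /= /compl_adj (inj_eq f_inj) [adj _ _]/= /star_adj !f0.
Qed.

Lemma induced_sub_compl_star (Y : graph) (m : nat) :
  is_induced_sub Y (compl (star m)) -> complete Y \/ costar Y.
Proof.
move=> [g [g_inj g_adj]].
have adjE x y : adj x y = (x != y) && ~~ ((g x == ord0) (+) (g y == ord0)).
  by rewrite -g_adj /= /compl_adj (inj_eq g_inj).
case: (pickP (fun y => g y == ord0)) => [y0 /eqP gy0 | no0]; [right | left].
  by apply: (costar_of_centre (y0 := y0)) => x y; rewrite adjE -gy0 !(inj_eq g_inj).
by move=> x y _ _ xy; rewrite adjE !no0 xy.
Qed.

Lemma compl_star_reduced (l m : nat) (H : graph) : lEPS l H -> reduced (Forb H) (compl (star m)).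
Proof.
move=> H_eps; have [l_gt0 _] := H_eps; exists l; split; first exact: chi_c_Forb.
exists 0; split=> // G /(option_colouringP _ 0 _ (Defs.iota (compl (star m)))) [A GA].
rewrite subn0 => G_cover [f f_emb]; apply: (lEPS_no_costar_remainder H_eps).
exists (f @^-1: A).
  exact/induced_sub_compl_star/(induced_sub_trans _ GA)/induced_sub_preimset.
by rewrite -preimsetC; apply: Hst_induced_sub G_cover; apply: induced_sub_preimset.
Qed.

Lemma compl_star_not_0star (m : nat) : ~ sstar 0 (compl (star m.+2)).
Proof.
move=> [S [S0 [cS_sS _]]]; move: S0 cS_sS; rewrite leqn0 cards_eq0 => /eqP-> [cS | sS].
  by have := cS ord0 (Ordinal (isT : 1 < m.+3)); rewrite !inE => /(_ isT isT isT).
by have := sS (Ordinal (isT : 1 < m.+3)) (Ordinal (isT : 2 < m.+3)); rewrite !inE => /(_ isT isT).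
Qed.

Lemma lEPS_not_critical0 (l : nat) (H : graph) : lEPS l H -> ~ critical 0 H.
Proof.
move=> H_eps [n0 crit]; apply: (@compl_star_not_0star n0).
by apply: crit (compl_star_reduced _ H_eps) _; rewrite (card_ord n0.+3) !leqW.
Qed.

(** * Large reduced graphs are 1-stars *)

Section OneStar.
Variables (K : graph) (n : nat).
Hypothesis anticomplete_pair_small : forall (a b : vert K) (Q : {set vert K}),
  a != b -> clique Q -> a \notin Q -> b \notin Q ->
  {in Q, forall q, ~~ adj a q && ~~ adj b q} -> #|Q| < n.
Hypothesis nonadjacent_pair_small : forall (a b : vert K) (Q : {set vert K}),
  a != b -> ~~ adj a b -> clique Q -> a \notin Q -> b \notin Q ->
  {in Q, forall q, adj a q && adj b q} -> #|Q| < n.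
Hypothesis pendant_small : forall (Q : {set vert K}) (u z : vert K),
  clique Q -> u \in Q -> z \notin Q -> adj z u -> {in Q :\ u, forall q, ~~ adj z q} -> #|Q| <= n.

Variable Q : {set vert K}.
Hypotheses (cQ : clique Q) (Q_big : 2 * n <= #|Q|).

Lemma pendant_subset_small (u z : vert K) (P : {set vert K}) :
  P \subset Q -> u \in Q -> z \notin Q -> adj z u -> {in P, forall q, ~~ adj z q} -> #|P| < n.
Proof.
move=> PQ uQ zQ zu zP.
have uP : u \notin P by apply: contraL zu => /zP.
have := pendant_small (Q := u |: P) (u := u) (z := z); rewrite cardsU1 uP add1n; apply.
- apply: clique_setU1 (clique_subset PQ cQ) _ => q qP.
  by apply: cQ uQ (subsetP PQ q qP) _; apply: (contraNneq _ uP) => ->.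
- exact: setU11.
- rewrite !inE negb_or; apply/andP; split; first by apply: (contraNneq _ zQ) => ->.
  by apply: contra zQ => /(subsetP PQ).
- exact: zu.
- by move=> q; rewrite !inE => /andP[qu /orP[/eqP qu' | /zP //]]; rewrite qu' eqxx in qu.
Qed.

Lemma adj_clique_all (v u q : vert K) : v \notin Q -> u \in Q -> q \in Q -> adj v u -> adj v q.
Proof.
move=> vQ uQ qQ vu; apply: contraT => vq.
(* One of the two parts of Q cut out by the neighbourhood of v has at least n vertices. *)
pose N := Q :&: [set w | adj v w]; pose M := Q :\: [set w | adj v w].
have NM : #|N| + #|M| = #|Q| by apply: cardsID.
have [M_big | M_small] := leqP n #|M|.
  suff : #|M| < n by lia.
  apply: (pendant_subset_small (u := u) (z := v)) => //; first exact: subsetDl.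
  by move=> w; rewrite !inE => /andP[].
have qN : q \notin N by rewrite !inE (negbTE vq) andbF.
suff : #|N| < n by lia.
apply: (nonadjacent_pair_small (a := v) (b := q)) => //.
- by apply: contraNneq vQ => ->.
- exact: clique_subset (subsetIl _ _) cQ.
- by rewrite !inE negb_and vQ.
- move=> w; rewrite !inE => /andP[wQ vw]; rewrite vw cQ //.
  by apply: contraNneq qN => ->; rewrite !inE wQ.
Qed.

Let isolated := [set v | (v \notin Q) && [forall q in Q, ~~ adj v q]].

Lemma isolatedP (z : vert K) : z \in isolated -> z \notin Q /\ {in Q, forall q, ~~ adj z q}.
Proof. by rewrite inE => /andP[zQ /forall_inP]. Qed.

Lemma adj_not_isolated (v q : vert K) : v \notin isolated -> v \notin Q -> q \in Q -> adj v q.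
Proof.
rewrite inE negb_and negbK => /orP[-> // | /forall_inPn[u uQ /negPn vu]] vQ qQ.
exact: adj_clique_all vu.
Qed.

Lemma clique_compl_isolated : clique (~: isolated).
Proof.
move=> x y; rewrite !in_setC => xi yi xy.
case: (boolP (x \in Q)) => xQ; case: (boolP (y \in Q)) => yQ.
- exact: cQ.
- by rewrite adj_sym adj_not_isolated.
- exact: adj_not_isolated.
apply: contraT => nxy; suff : #|Q| < n by lia.
by apply: (nonadjacent_pair_small xy nxy cQ xQ yQ) => q qQ; rewrite !adj_not_isolated.
Qed.

Lemma card_isolated : #|isolated| <= 1.
Proof.
apply/card_le1_eqP => x y /isolatedP[xQ xQ'] /isolatedP[yQ yQ']; apply/eqP; apply: contraT => xy.
suff : #|Q| < n by lia.
by apply: (anticomplete_pair_small xy cQ yQ xQ) => q qQ; rewrite xQ' ?yQ'.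
Qed.

Lemma isolated_anticomplete (z w : vert K) : z \in isolated -> w \notin isolated -> ~~ adj z w.
Proof.
move=> zi wi; have [zQ zQ'] := isolatedP zi; apply/negP => zw.
have wQ : w \notin Q by apply: contraL zw => /zQ'.
suff : #|w |: Q| <= n by rewrite cardsU1 wQ; lia.
apply: (pendant_small (u := w) (z := z)).
- apply: clique_setU1 cQ _ => q; exact: adj_not_isolated.
- exact: setU11.
- by rewrite !inE negb_or zQ andbT; apply: (contraNneq _ wi) => <-.
- exact: zw.
- by move=> q; rewrite !inE => /andP[qw /orP[/eqP qw' | /zQ' //]]; rewrite qw' eqxx in qw.
Qed.

Lemma one_star_of_large_clique : sstar 1 K.
Proof.
exists isolated; split; [exact: card_isolated | split; first by left; exact: clique_compl_isolated].
by move=> z zi; right=> w; apply: isolated_anticomplete.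
Qed.

End OneStar.

Lemma remainder_free_one_star (l : nat) (H K : graph) (Q : {set vert K}) :
  lEPS l H -> remainder_free H K 0 (l - 1) -> clique Q -> 2 * #|vert H| <= #|Q| -> sstar 1 K.
Proof.
move=> [_ [_ [E_S2 [E_K2 [E_join [E_Cplus _]]]]]] K_free cQ Q_big.
have [Y_S2 [S2_Y S2_n S2_K]] := remainder_free_EPS2 E_S2 K_free.
have [Y_K2 [K2_Y K2_n K2_K]] := remainder_free_EPS2 E_K2 K_free.
have [Y_join [join_Y join_n join_K]] := remainder_free_EPS2 E_join K_free.
have [Y_Cp [Cp_Y Cp_n Cp_K]] := remainder_free_EPS2 E_Cplus K_free.
apply: (one_star_of_large_clique (n := #|vert H|)) cQ Q_big
  => [a b C ab cC aC bC abC | a b C ab nab cC aC bC abC | C u z cC uC zC zu zC'].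
- rewrite ltnNge; apply/negP => nC.
  have pairC i : pair a b i \notin C /\ {in C, forall q, ~~ adj (pair a b i) q}.
    by apply: (@pairP K (fun v => v \notin C /\ {in C, forall q, ~~ adj v q}));
      split=> // q /abC /andP[].
  case: (boolP (adj a b)) => [ab_adj | ab_nadj].
    exact: K2_K (disj_union_embed a K2_Y (pair_embedding_K2 ab_adj) cC pairC (leq_trans K2_n nC)).
  exact: S2_K (disj_union_embed a S2_Y (pair_embedding_S2 ab ab_nadj) cC pairC (leq_trans S2_n nC)).
- rewrite ltnNge; apply/negP => nC.
  have pairC i : pair a b i \notin C /\ {in C, forall q, adj (pair a b i) q}.
    by apply: (@pairP K (fun v => v \notin C /\ {in C, forall q, adj v q}));
      split=> // q /abC /andP[].
  exact: join_K (join_embed a join_Y (pair_embedding_S2 ab nab) cC pairC (leq_trans join_n nC)).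
- rewrite leqNgt; apply/negP => nC.
  exact: Cp_K (Cplus_embed Cp_Y cC uC zC zu zC' (leq_ltn_trans Cp_n nC)).
Qed.

Lemma lEPS_critical1 (l : nat) (H : graph) : lEPS l H -> critical 1 H.
Proof.
move=> H_eps; have [_ [H_split _]] := H_eps.
pose n := #|vert H|; exists (2 ^ (3 * n)) => K K_red K_big.
have [s sl] := lEPS_reduced H_eps K_red; rewrite -subnDA add1n => K_free.
have /card_gt0P[k0 _] : 0 < #|vert K| by rewrite (leq_trans _ K_big) ?expn_gt0.
have := @ramsey K (2 * n) n [set: vert K]; rewrite cardsT -mulSnr => /(_ K_big).
case=> Q _ [[cQ Q_big] | [sQ Q_big]]; last first.
  by have := remainder_free_stable k0 (H_split s.+1 ltac:(lia)) K_free sQ; lia.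
case: s => [| s] in sl K_free *; last first.
  have H_cover : Hst s.+1 (l - s.+2).+1 H by rewrite subnSK //; apply: H_split; lia.
  by have := remainder_free_clique k0 H_cover K_free cQ; lia.
exact: remainder_free_one_star H_eps K_free cQ Q_big.
Qed.

Theorem lemma3p11 (H : graph) : EPS H -> critical 1 H /\ ~ critical 0 H.
Proof.
by move=> [l H_eps]; split; [exact: lEPS_critical1 H_eps | exact: lEPS_not_critical0 H_eps].
Qed.
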